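(* Let $f:\mathcal X\to\mathbb R$ be Lipschitz continuous with Lipschitz constant $|f|_1<\infty$. Then for every $\varepsilon>0$ the maximum $M_f=\max_{x\in\mathcal X}f(x)$ satisfies \[|M_f-\varepsilon L_{f/\varepsilon}|\le\varepsilon d\log(1+3d^{-1/2}|f|_1/\varepsilon),\] and the right-hand side tends to $0$ as $\varepsilon\searrow0$. Moreover, for any bounded measurable $f:\mathcal X\to\mathbb R$, any $\varepsilon>0$ and any $\delta\in(0,1]$, \[P_{f/\varepsilon}(\{x\in\mathcal X:f(x)<\varepsilon L_{f/\varepsilon}-\varepsilon\log(1/\delta)\})\le\delta.\]
   Context: $\mathcal X=[0,1]^d$ with Lebesgue measure. For bounded measurable $h$: $Z_h=\int_{\mathcal X}e^h dx$, $L_h=\log Z_h$, $P_h$ the distribution with density $e^h/Z_h$. $|f|_1$ denotes the minimal Lipschitz constant with respect to the Euclidean norm. *)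

From HB Require Import structures.
From mathcomp Require Import all_boot all_order all_algebra.
From mathcomp Require Import all_classical all_reals all_analysis.
Unset Printing Implicit Defensive.
Import Order.TTheory GRing.Theory Num.Theory.
Import numFieldNormedType.Exports.
Local Open Scope classical_set_scope.
Local Open Scope ring_scope.

Section defs.
Variable R : realType.

(* d-dimensional Lebesgue measure on R^d = d.-tuple R (with the product
   sigma-algebra of the library), defined as the iterated product measure
   lambda_{n+1}(A) = \int lambda_n(x-section of A) dx, lambda_0 = Dirac. *)
Fixpoint lebesgue_tuple (n : nat) : set (n.-tuple R) -> \bar R :=
  match n return set (n.-tuple R) -> \bar R with
  | 0 => fun A => (\1_A [tuple] : R)%:E
  | n'.+1 => fun A =>
      (\int[@lebesgue_measure R]_x
          lebesgue_tuple n' [set t : n'.-tuple R | A (cons_tuple x t)])%E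
  end.

Definition cube (d : nat) : set (d.-tuple R) :=
  [set x | forall i : 'I_d, 0 <= tnth x i <= 1].

Definition eucl_dist (d : nat) (x y : d.-tuple R) : R :=
  Num.sqrt (\sum_(i < d) (tnth x i - tnth y i) ^+ 2).

Definition lipconst (d : nat) (f : d.-tuple R -> R) : R :=
  inf [set C : R | 0 <= C /\
         forall x y, cube d x -> cube d y -> `|f x - f y| <= C * eucl_dist d x y].

Definition Zpart (d : nat) (h : d.-tuple R -> R) : R :=
  fine (\int[@lebesgue_tuple d]_(x in cube d) (expR (h x))%:E)%E.

Definition Lpart (d : nat) (h : d.-tuple R -> R) : R := ln (Zpart d h).

Definition Pgibbs (d : nat) (h : d.-tuple R -> R) (A : set (d.-tuple R)) : R :=
  fine (\int[@lebesgue_tuple d]_(x in A `&` cube d) (expR (h x))%:E)%E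
  / Zpart d h.

(* M_f = max_{x in X} f(x) (the supremum of f over X, attained for continuous f) *)
Definition maxf (d : nat) (f : d.-tuple R -> R) : R := sup (f @` cube d).

End defs.

Arguments lebesgue_tuple {R}.
Arguments cube {R}.
Arguments eucl_dist {R}.
Arguments lipconst {R}.
Arguments Zpart {R}.
Arguments Lpart {R}.
Arguments Pgibbs {R}.
Arguments maxf {R}.

(* Write h = f/eps and M = max f.  Since e^h <= e^(M/eps) on the unit cube X,
   eps L_h <= M.  Conversely, a point x with f x > M - eta lies in an
   axis-parallel cube of side s <= 1 inside X, on which f >= f x - |f|_1 sqrt(d) s;
   this cube alone contributes e^((f x - |f|_1 sqrt(d) s)/eps) s^d to Z_h, so
   M - eps L_h <= eta + eps d (b s - ln s) with b = |f|_1 / (sqrt(d) eps).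
   For s = min(1, 1/b) one has b s - ln s <= ln (1 + 3 b), using e <= 3, and
   ln (1 + y) <= 2 sqrt(y) makes the bound vanish as eps -> 0.  The tail bound
   is Markov's inequality: on the set in question e^h <= delta Z_h, and X has
   volume 1.  The iterated integral defining Lebesgue measure on R^d is a
   push-forward of product measures, hence a measure, by induction on d. *)

From HB Require Import structures.
From mathcomp Require Import all_boot all_order all_algebra.
From mathcomp Require Import all_classical all_reals all_analysis.
From mathcomp Require Import ring lra.
Import Order.TTheory GRing.Theory Num.Theory.
Import numFieldNormedType.Exports.

Set Implicit Arguments.
Unset Strict Implicit.
Unset Printing Implicit Defensive.

Local Open Scope classical_set_scope.
Local Open Scope ring_scope.

Section lebesgue_tuple_measure.
Context (R : realType).

Section successor.
Variables (n : nat) (mu : {sigma_finite_measure set (n.-tuple R) -> \bar R}).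

Definition tcons (p : R * n.-tuple R) : n.+1.-tuple R := cons_tuple p.1 p.2.

Definition tuncons (t : n.+1.-tuple R) : R * n.-tuple R :=
  (thead t, [tuple of behead t]).

Lemma tconsK : cancel tcons tuncons.
Proof. by case=> x t; congr pair; apply: val_inj. Qed.

Lemma measurable_tcons : measurable_fun [set: R * n.-tuple R] tcons.
Proof. exact: (@measurable_cons _ _ _ _ fst n snd). Qed.

Lemma measurable_tuncons : measurable_fun [set: n.+1.-tuple R] tuncons.
Proof.
by apply/measurable_fun_pairP; split; [exact: measurable_tnth|exact: measurable_behead].
Qed.

Definition lebesgue_tuple_succ := pushforward (@lebesgue_measure R \x mu)%E tcons.

(* The library's push-forward instance is parameterised by the measurability
   of the map, which inference cannot supply. *)
HB.instance Definition _ := Measure.copy lebesgue_tuple_succ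
  (@measure_function_pushforward__canonical__measure_function_Measure
     _ _ _ _ _ (@lebesgue_measure R \x mu)%E tcons measurable_tcons).

Let lebesgue_tuple_succ_sigma_finite : sigma_finite setT lebesgue_tuple_succ.
Proof.
(* The canonical sigma-finite structure on [_ \x _] is the one for
   subprobabilities, so the cover is assembled from covers of the factors. *)
have /sigma_finiteP[F [UF ndF Foo]] := sigma_finiteT (@lebesgue_measure R).
have /sigma_finiteP[G [UG ndG Goo]] := sigma_finiteT mu.
exists (fun k => tuncons @^-1` (F k `*` G k)).
  rewrite -preimage_bigcup; apply/esym/seteqP; split => // t _.
  have [[i _ Fi] [j _ Gj]] : (\bigcup_i F i) (thead t) /\ (\bigcup_j G j) (tuncons t).2.
    by rewrite -UF -UG.
  exists (maxn i j) => //; split.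
  - by move/subsetPset: (ndF _ _ (leq_maxl i j)); apply.
  - by move/subsetPset: (ndG _ _ (leq_maxr i j)); apply.
move=> k; have [mFk Fko] := Foo k; have [mGk Gko] := Goo k; split.
  rewrite -[X in measurable X]setTI.
  exact: measurable_tuncons measurableT _ (measurableX mFk mGk).
rewrite /lebesgue_tuple_succ /pushforward -comp_preimage.
rewrite (_ : tuncons \o tcons = id); last exact/funext/tconsK.
by rewrite preimage_id product_measure1E// lte_mul_pinfty// ge0_fin_numE.
Qed.

HB.instance Definition _ := Measure_isSigmaFinite.Build _ _ _ lebesgue_tuple_succ
  lebesgue_tuple_succ_sigma_finite.

Lemma lebesgue_tuple_succE : lebesgue_tuple n = mu ->
  lebesgue_tuple n.+1 = lebesgue_tuple_succ.
Proof.
move=> mu_n; apply/funext => A /=.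
rewrite /lebesgue_tuple_succ /pushforward /product_measure1 /= mu_n.
apply: eq_integral => x _ /=; congr (mu _).
by apply/seteqP; split => t /=; rewrite /xsection /= inE.
Qed.

End successor.

Lemma lebesgue_tuple_sigma_finite n :
  exists mu : {sigma_finite_measure set (n.-tuple R) -> \bar R}, lebesgue_tuple n = mu.
Proof.
elim: n => [|n [mu mu_n]]; first by exists (\d_([tuple] : 0.-tuple R)).
by exists (lebesgue_tuple_succ mu); exact: lebesgue_tuple_succE.
Qed.

Variable n : nat.

Let lebesgue_tuple0 : @lebesgue_tuple R n set0 = 0%E.
Proof. by have [mu ->] := lebesgue_tuple_sigma_finite n; exact: measure0. Qed.

Let lebesgue_tuple_ge0 A : (0 <= @lebesgue_tuple R n A)%E.
Proof. by have [mu ->] := lebesgue_tuple_sigma_finite n; exact: measure_ge0. Qed.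

Let lebesgue_tuple_sigma_additive : semi_sigma_additive (@lebesgue_tuple R n).
Proof.
by have [mu ->] := lebesgue_tuple_sigma_finite n; exact: measure_semi_sigma_additive.
Qed.

HB.instance Definition _ := isMeasure.Build _ _ _ (@lebesgue_tuple R n)
  lebesgue_tuple0 lebesgue_tuple_ge0 lebesgue_tuple_sigma_additive.

End lebesgue_tuple_measure.

Section box.
Context (R : realType).
Local Open Scope ereal_scope.

Definition box n (a b : nat -> R) : set (n.-tuple R) :=
  [set t | forall i : 'I_n, (a i <= tnth t i <= b i)%R].
Arguments box : clear implicits.

Lemma box_cons n a b x (t : n.-tuple R) :
  box n.+1 a b (cons_tuple x t) <->
  (a 0%N <= x <= b 0%N)%R /\ box n (a \o S) (b \o S) t.
Proof.
have tnth_lift (i : 'I_n) : tnth (cons_tuple x t) (lift ord0 i) = tnth t i.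
  by rewrite !(tnth_nth 0%R).
split=> [Bxt | [x_ab Bt] i].
  by split=> [|i]; [exact: (Bxt ord0) | rewrite -tnth_lift; exact: (Bxt (lift ord0 i))].
by case: (unliftP ord0 i) => [j ->|->]; [rewrite tnth_lift; exact: Bt | exact: x_ab].
Qed.

Lemma measurable_box n a b : measurable (box n a b).
Proof.
have -> : box n a b = \bigcap_(i in [set: 'I_n])
    ((fun t : n.-tuple R => tnth t i) @^-1` `[a i, b i]%classic).
  apply/seteqP; split => t /= Bt i; last by have := Bt i I; rewrite /= in_itv.
  by move=> _; rewrite /= in_itv; exact: Bt.
apply: fin_bigcap_measurable; first exact: finite_finset.
move=> i _; rewrite -[X in measurable X]setTI.
exact: measurable_tnth measurableT _ (measurable_itv `[a i, b i]).
Qed.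

Lemma box_section n a b x :
  [set t | box n.+1 a b (cons_tuple x t)] =
  if (a 0%N <= x <= b 0%N)%R then box n (a \o S) (b \o S) else set0.
Proof.
apply/seteqP; case: ifP => x_ab; split=> t //=; first by case/box_cons.
- by move=> Bt; apply/box_cons.
- by case/box_cons; rewrite x_ab.
Qed.

Lemma lebesgue_tuple_box n a b : (forall i, a i <= b i)%R ->
  lebesgue_tuple n (box n a b) = (\prod_(i < n) (b i - a i))%:E.
Proof.
elim: n a b => [|n IH] a b ab.
  by rewrite /= big_ord0 indicE mem_set// => -[].
pose I0 : set R := [set` `[a 0%N, b 0%N]%R].
have mI0 : measurable I0 by exact: measurable_itv.
have I0E : @lebesgue_measure R I0 = if (a 0%N < b 0%N)%R then (b 0%N - a 0%N)%:E else 0.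
  by rewrite /I0 lebesgue_measure_itv /= lte_fin -EFinB.
rewrite big_ord_recl /=.
transitivity (\int[@lebesgue_measure R]_x
   ((\1_I0 x)%:E * (\prod_(i < n) (b i.+1 - a i.+1))%:E)).
  apply: eq_integral => x _; rewrite box_section indicE.
  have -> : (x \in I0) = (a 0%N <= x <= b 0%N)%R by apply/idP/idP; rewrite /I0 inE /= in_itv.
  case: ifP => _ /=; last by rewrite mul0e measure0.
  by rewrite mul1e IH // => i; exact: ab.
rewrite ge0_integralZr//; last 2 first.
- by apply/measurable_realfun.measurable_EFinP; exact: measurable_realfun.measurable_indic.
- by rewrite lee_fin; apply: prodr_ge0 => i _; rewrite subr_ge0.
rewrite integral_indic// setIT [X in X * _]I0E.
have [ab0|ba0] := ltrP (a 0%N) (b 0%N); first by rewrite -EFinM.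
by rewrite (@le_anti _ _ (b 0%N) (a 0%N)) ?ab ?ba0 // subrr mul0r mul0e.
Qed.

Lemma cubeE d : cube d = box d (fun=> 0%R) (fun=> 1%R).
Proof. by []. Qed.

Lemma measurable_cube d : measurable (@cube R d).
Proof. by rewrite cubeE; exact: measurable_box. Qed.

Lemma lebesgue_tuple_cube d : lebesgue_tuple d (@cube R d) = 1.
Proof. by rewrite cubeE lebesgue_tuple_box ?subr0 ?big1// => _; exact: ler01. Qed.

End box.
Arguments box {R}.

Section integral_bounds.
Context d (T : measurableType d) (R : realType) (mu : {measure set T -> \bar R}).
Local Open Scope ereal_scope.

Lemma ge0_subset_le_integral (D1 D2 : set T) (f g : T -> \bar R) :
  (forall x, D1 x -> 0 <= f x) -> (forall x, D2 x -> 0 <= g x) ->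
  (forall x, D1 x -> D2 x /\ f x <= g x) ->
  \int[mu]_(x in D1) f x <= \int[mu]_(x in D2) g x.
Proof.
move=> f0 g0 fg; rewrite !ge0_integralE //; apply: ereal_sup_le.
move=> _ [h hf <-]; exists h => // x; apply: le_trans (hf x) _.
rewrite /patch; case: ifPn => [|_]; first by rewrite inE => /fg[D2x]; rewrite mem_set.
by case: ifPn => // /set_mem /g0.
Qed.

Lemma cst_mul_measure_le_integral (D B : set T) (f : T -> \bar R) (c : R) :
  measurable B -> B `<=` D -> (0 <= c)%R ->
  (forall x, D x -> 0 <= f x) -> (forall x, B x -> c%:E <= f x) ->
  c%:E * mu B <= \int[mu]_(x in D) f x.
Proof.
move=> mB BD c0 f0 cf; rewrite -integral_cst//.
apply: ge0_subset_le_integral => [x _|//|x Bx]; first by rewrite lee_fin.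
by split; [exact: BD | exact: cf].
Qed.

Lemma integral_le_cst_mul_measure (D : set T) (f : T -> \bar R) (c : R) :
  measurable D -> (0 <= c)%R ->
  (forall x, D x -> 0 <= f x) -> (forall x, D x -> f x <= c%:E) ->
  \int[mu]_(x in D) f x <= c%:E * mu D.
Proof.
move=> mD c0 f0 fc; rewrite -integral_cst//.
apply: ge0_subset_le_integral => [//|x _|x Dx]; first by rewrite lee_fin.
by split; [|exact: fc].
Qed.

End integral_bounds.

Section partition_function.
Context (R : realType) (d : nat).
Implicit Types (h : d.-tuple R -> R) (a b c t : R).

Lemma integral_expR_cube_le h b : (forall x, cube d x -> h x <= b) ->
  (\int[lebesgue_tuple d]_(x in cube d) (expR (h x))%:E <= (expR b)%:E)%E.
Proof.
move=> hb; rewrite -[X in (_ <= X)%E]mule1 -(@lebesgue_tuple_cube R d).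
apply: integral_le_cst_mul_measure.
- exact: measurable_cube.
- exact: expR_ge0.
- by move=> x _; rewrite lee_fin expR_ge0.
- by move=> x cx; rewrite lee_fin ler_expR hb.
Qed.

Lemma cst_measure_le_integral_expR h (B : set (d.-tuple R)) c :
  measurable B -> B `<=` cube d -> (forall x, B x -> c <= h x) ->
  ((expR c)%:E * lebesgue_tuple d B <=
   \int[lebesgue_tuple d]_(x in cube d) (expR (h x))%:E)%E.
Proof.
move=> mB Bcube hc; apply: cst_mul_measure_le_integral => // x Bx.
by rewrite lee_fin ler_expR hc.
Qed.

Section bounded.
Variables (h : d.-tuple R -> R) (a b : R).
Hypothesis h_ab : forall x, cube d x -> a <= h x <= b.

Let h_ge x : cube d x -> a <= h x.
Proof. by case/h_ab/andP. Qed.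

Let h_le x : cube d x -> h x <= b.
Proof. by case/h_ab/andP. Qed.

Lemma ZpartE :
  (\int[lebesgue_tuple d]_(x in cube d) (expR (h x))%:E)%E = (Zpart d h)%:E.
Proof.
have le_b := integral_expR_cube_le h_le.
rewrite fineK// ge0_fin_numE ?(le_lt_trans le_b) ?ltry//.
by apply: integral_ge0 => x _; rewrite lee_fin expR_ge0.
Qed.

Lemma Zpart_gt0 : 0 < Zpart d h.
Proof.
have := cst_measure_le_integral_expR (@measurable_cube R d) (@subset_refl _ _) h_ge.
rewrite lebesgue_tuple_cube mule1 ZpartE lee_fin; apply: lt_le_trans.
exact: expR_gt0.
Qed.

Lemma Lpart_le : Lpart d h <= b.
Proof.
rewrite -[b]expRK ler_ln ?posrE ?expR_gt0 ?Zpart_gt0// -lee_fin -ZpartE.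
exact: integral_expR_cube_le h_le.
Qed.

Lemma Lpart_ge (B : set (d.-tuple R)) c m :
  measurable B -> B `<=` cube d -> (forall x, B x -> c <= h x) ->
  lebesgue_tuple d B = m%:E -> 0 < m -> c + ln m <= Lpart d h.
Proof.
move=> mB Bcube hc Bm m0.
have := cst_measure_le_integral_expR mB Bcube hc.
rewrite Bm ZpartE lee_fin -ler_ln ?posrE ?mulr_gt0 ?expR_gt0 ?Zpart_gt0//.
by rewrite lnM ?posrE ?expR_gt0// expRK.
Qed.

Lemma Pgibbs_le_expR (A : set (d.-tuple R)) t :
  (forall x, A x -> cube d x -> h x <= t) -> Pgibbs d h A <= expR (t - Lpart d h).
Proof.
move=> ht; rewrite /Pgibbs expRB lnK ?posrE ?Zpart_gt0//.
rewrite ler_pM2r ?invr_gt0 ?Zpart_gt0//.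
have I0 : (0 <= \int[lebesgue_tuple d]_(x in A `&` cube d) (expR (h x))%:E)%E.
  by apply: integral_ge0 => x _; rewrite lee_fin expR_ge0.
have It : (\int[lebesgue_tuple d]_(x in A `&` cube d) (expR (h x))%:E <= (expR t)%:E)%E.
  apply: le_trans (integral_expR_cube_le (fun _ _ => lexx t)).
  apply: ge0_subset_le_integral => [x _|x _|x [Ax cx]]; rewrite ?lee_fin ?expR_ge0//.
  by split=> //; rewrite ler_expR ht.
by rewrite -lee_fin fineK// ge0_fin_numE// (le_lt_trans It) ?ltry.
Qed.

End bounded.

End partition_function.

Section lipschitz_on_cube.
Context (R : realType) (d : nat).
Implicit Types (f h : d.-tuple R -> R) (x y t : d.-tuple R) (K s : R).

Definition cube_lipschitz K f :=
  forall x y, cube d x -> cube d y -> `|f x - f y| <= K * eucl_dist d x y.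

Lemma eucl_dist_le x y s : 0 <= s ->
  (forall i, `|tnth x i - tnth y i| <= s) -> eucl_dist d x y <= Num.sqrt d%:R * s.
Proof.
move=> s0 xy_s; rewrite /eucl_dist -[s in X in _ <= X](ger0_norm s0) -sqrtr_sqr -sqrtrM//.
rewrite ler_sqrt ?mulr_ge0 ?sqr_ge0// mulr_natl -[d in _ *+ d]card_ord -sumr_const.
apply: ler_sum => i _.
by rewrite -real_normK ?num_real// lerXn2r ?nnegrE ?normr_ge0// xy_s.
Qed.

Lemma cube_eucl_dist_le x y : cube d x -> cube d y -> eucl_dist d x y <= Num.sqrt d%:R.
Proof.
move=> cx cy; rewrite -[leRHS]mulr1; apply: eucl_dist_le => // i.
have /andP[? ?] := cx i; have /andP[? ?] := cy i.
by rewrite ler_norml; apply/andP; split; lra.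
Qed.

Lemma cube_lipschitz_bounded K f x y : 0 <= K -> cube_lipschitz K f ->
  cube d x -> cube d y -> `|f x - f y| <= K * Num.sqrt d%:R.
Proof.
move=> K0 fK cx cy; apply: le_trans (fK x y cx cy) _.
by rewrite ler_wpM2l// cube_eucl_dist_le.
Qed.

Lemma cube_lipschitz_scale K f e : 0 < e -> cube_lipschitz K f ->
  cube_lipschitz (K / e) (fun x => f x / e).
Proof.
move=> e0 fK x y cx cy; rewrite -mulrBl normrM [`|_^-1|]gtr0_norm ?invr_gt0//.
by rewrite mulrAC ler_pM2r ?invr_gt0//; exact: fK.
Qed.

Section lipconst.
Variable f : d.-tuple R -> R.
Hypothesis f_lip : exists C, cube_lipschitz C f.

Let has_inf_lipconst : has_inf [set C | 0 <= C /\ cube_lipschitz C f].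
Proof.
split; last by exists 0 => C [].
have [C fC] := f_lip; exists (Num.max C 0); split; first by rewrite le_max lexx orbT.
move=> x y cx cy; apply: le_trans (fC x y cx cy) _.
by rewrite ler_wpM2r ?le_max ?lexx// /eucl_dist sqrtr_ge0.
Qed.

Lemma lipconst_ge0 : 0 <= lipconst d f.
Proof. by apply: lb_le_inf; [exact: has_inf_lipconst.1 | move=> C []]. Qed.

Lemma lipconst_lipschitz : cube_lipschitz (lipconst d f) f.
Proof.
move=> x y cx cy; have [S0 _] := has_inf_lipconst.
have [D0|D_gt0] := eqVneq (eucl_dist d x y) 0.
  by have [C [_ /(_ x y cx cy)]] := S0; rewrite D0 !mulr0.
have D_pos : 0 < eucl_dist d x y by rewrite lt0r D_gt0 sqrtr_ge0.
rewrite -ler_pdivrMr//; apply: lb_le_inf => // C [_ /(_ x y cx cy) fC].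
by rewrite ler_pdivrMr.
Qed.

End lipconst.

End lipschitz_on_cube.

Section real_inequalities.
Context (R : realType).
Implicit Types b c k x y : R.

Lemma expR_mul1B_le1 x : expR x * (1 - x) <= 1.
Proof.
have := expR_ge1Dx (- x); have := expRxMexpNx_1 x; have := expR_gt0 x; nra.
Qed.

Lemma expR1_le3 : expR 1 <= 3 :> R.
Proof.
have e8 : expR 8^-1 <= 8 / 7 :> R.
  have := expR_mul1B_le1 8^-1; have := expR_gt0 (8^-1 : R).
  by rewrite ler_pdivlMr//; lra.
rewrite -[1 : R](@mulfV _ 8%:R)// expRM_natl.
apply: (@le_trans _ _ ((8 / 7) ^+ 8)); last by rewrite !exprS expr0; lra.
by rewrite lerXn2r ?nnegrE ?expR_ge0//; lra.
Qed.

Lemma expR_le1D3 b : 0 <= b <= 1 -> expR b <= 1 + 3 * b.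
Proof.
move=> /andP[b0 b1].
have := expR_mul1B_le1 (b / 2); set u := expR (b / 2) => u_le.
have u0 : 0 <= u * (1 - b / 2) by rewrite mulr_ge0 ?expR_ge0//; lra.
have expRb : expR b = u ^+ 2 by rewrite -expRM_natr; congr expR; lra.
have w0 : 0 < (1 - b / 2) ^+ 2 by rewrite exprn_gt0//; lra.
have v2 : (u * (1 - b / 2)) ^+ 2 <= 1 by rewrite expr2; nra.
(* (1 + 3 b) (1 - b/2)^2 - 1 = b (1 - b) (8 - 3 b) / 4 *)
have poly_ge0 : 0 <= b * (1 - b) * (8 - 3 * b) by rewrite !mulr_ge0//; lra.
have w1 : 1 <= (1 + 3 * b) * (1 - b / 2) ^+ 2 by rewrite expr2; nra.
by rewrite expRb -(ler_pM2r w0); rewrite exprMn in v2; lra.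
Qed.

Lemma exists_scale_ln1D3 b : 0 <= b ->
  exists2 s, 0 < s <= 1 & b * s - ln s <= ln (1 + 3 * b).
Proof.
move=> b0; have [b1|b1] := lerP b 1.
  exists 1; first by rewrite ltr01 lexx.
  rewrite ln1 subr0 mulr1 -[X in X <= _]expRK ler_ln ?posrE ?expR_gt0//; last lra.
  by apply: expR_le1D3; rewrite b0 b1.
have b_gt0 : 0 < b by lra.
exists b^-1; first by rewrite invr_gt0 b_gt0 invf_le1 ?ltW.
rewrite mulfV ?gt_eqF// lnV ?posrE// opprK -[X in X + _]expRK -lnM ?posrE ?expR_gt0//.
by rewrite ler_ln ?posrE ?mulr_gt0 ?expR_gt0//; [have := expR1_le3; nra | lra].
Qed.

Lemma ln1D_le2sqrt y : 0 <= y -> ln (1 + y) <= 2 * Num.sqrt y.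
Proof.
move=> y0; have s0 := sqrtr_ge0 y; have sy : Num.sqrt y ^+ 2 = y by rewrite sqr_sqrtr.
apply: (@le_trans _ _ (ln ((1 + Num.sqrt y) ^+ 2))).
  by rewrite ler_ln ?posrE; nra.
by rewrite lnXn; [have := @le_ln1Dx R (Num.sqrt y); rewrite mulr2n; lra | lra].
Qed.

Lemma cvg_mul_ln1Ddiv k c : 0 <= c ->
  (fun e => e * k * ln (1 + c / e)) x @[x --> 0^'+] --> 0.
Proof.
move=> c0.
have sqrt_cvg : Num.sqrt (c * e) @[e --> 0^'+] --> 0.
  apply: cvg_at_right_filter; rewrite -[X in _ --> X](sqrtr0 R) -[X in Num.sqrt X](mulr0 c).
  by apply: continuous_comp; [exact: mulrl_continuous | exact: sqrt_continuous].
have eln_cvg : e * ln (1 + c / e) @[e --> 0^'+] --> 0.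
  have bound_cvg : 2 * Num.sqrt (c * e) @[e --> 0^'+] --> 0.
    by rewrite -[X in _ --> X](mulr0 2); exact: cvgM (cvg_cst _) sqrt_cvg.
  apply: (squeeze_cvgr _ (cvg_cst 0) bound_cvg).
  near=> e; have e0 : 0 < e by near: e; exact: nbhs_right_gt.
  have ce0 : 0 <= c / e by rewrite divr_ge0// ltW.
  apply/andP; split.
    by apply: mulr_ge0; [exact: ltW | apply: ln_ge0; lra].
  have sqrt_ce : e * Num.sqrt (c / e) = Num.sqrt (c * e).
    rewrite -{1}(ger0_norm (ltW e0)) -sqrtr_sqr -sqrtrM ?sqr_ge0//.
    by congr Num.sqrt; field; rewrite gt_eqF.
  by rewrite -sqrt_ce mulrCA ler_pM2l//; exact: ln1D_le2sqrt.
rewrite -[X in _ --> X](mulr0 k); apply: cvg_trans (cvgM (cvg_cst k) eln_cvg).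
by apply: near_eq_cvg; near=> e; rewrite /= mulrCA mulrA.
Unshelve. all: by end_near.
Qed.

End real_inequalities.

Section log_partition_near_max.
Context (R : realType) (d : nat).
Implicit Types (h : d.-tuple R -> R) (x : d.-tuple R) (K s : R).

Lemma cube_subbox x s : cube d x -> 0 < s <= 1 ->
  exists a : nat -> R, let B := box d a (fun i => a i + s) in
  [/\ B `<=` cube d, forall t, B t -> eucl_dist d x t <= Num.sqrt d%:R * s
    & lebesgue_tuple d B = (s ^+ d)%:E].
Proof.
move=> cx /andP[s0 s1]; exists (fun i => Num.min (nth 0 x i) (1 - s)) => B.
have coord t i : B t -> 0 <= tnth t i <= 1 /\ `|tnth x i - tnth t i| <= s.
  move=> /(_ i) /andP[lo hi]; have /andP[x0 x1] := cx i.
  rewrite !(tnth_nth 0) ler_norml in lo hi x0 x1 *.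
  by case: (leP (nth 0 x i) (1 - s)) lo hi => xs lo hi; split; apply/andP; split; lra.
split=> [t Bt i|t Bt|]; first by have [] := coord t i Bt.
  by apply: eucl_dist_le => [|i]; [exact: ltW | have [] := coord t i Bt].
rewrite lebesgue_tuple_box => [|i]; last by lra.
by congr EFin; rewrite (eq_bigr (fun=> s)) => [|i _]; [rewrite prodr_const card_ord | lra].
Qed.

Lemma Lpart_ge_local h K x s : 0 <= K -> cube_lipschitz K h -> cube d x -> 0 < s <= 1 ->
  h x - K * Num.sqrt d%:R * s + d%:R * ln s <= Lpart d h.
Proof.
move=> K0 hK cx s01; have s0 : 0 < s by case/andP: s01.
have [a [Bcube Bdist Bvol]] := cube_subbox cx s01.
have h_bounded y : cube d y -> h x - K * Num.sqrt d%:R <= h y <= h x + K * Num.sqrt d%:R.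
  by move=> cy; have := cube_lipschitz_bounded K0 hK cx cy; rewrite ler_distlC.
rewrite mulr_natl -lnXn//.
apply: (Lpart_ge h_bounded _ Bcube _ Bvol (exprn_gt0 _ s0)); first exact: measurable_box.
move=> t Bt; have := hK x t cx (Bcube t Bt); rewrite ler_distlC => /andP[+ _].
by apply: le_trans; rewrite lerD2l lerN2 -mulrA ler_wpM2l// Bdist.
Qed.

End log_partition_near_max.

Section free_energy.
Context (R : realType) (d : nat).
Implicit Types (f h : d.-tuple R -> R) (K : R).

Lemma cube_origin : cube d [tuple (0 : R) | _ < d].
Proof. by move=> i; rewrite tnth_mktuple lexx ler01. Qed.

Lemma has_sup_cube_lipschitz f K : 0 <= K -> cube_lipschitz K f -> has_sup (f @` cube d).
Proof.
move=> K0 fK; have cx0 := cube_origin.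
split; first by exists (f [tuple 0 | _ < d]), [tuple 0 | _ < d].
exists (f [tuple 0 | _ < d] + K * Num.sqrt d%:R) => _ [x cx <-].
by have := cube_lipschitz_bounded K0 fK cx0 cx; rewrite ler_distlC => /andP[].
Qed.

Lemma cube_lipschitz_Lpart_le h K b : 0 <= K -> cube_lipschitz K h ->
  (forall x, cube d x -> h x <= b) -> Lpart d h <= b.
Proof.
move=> K0 hK hb; apply: (@Lpart_le _ _ _ (h [tuple 0 | _ < d] - K * Num.sqrt d%:R)) => x cx.
rewrite hb// andbT; have := cube_lipschitz_bounded K0 hK cube_origin cx.
by rewrite ler_distlC => /andP[].
Qed.

Lemma maxf_Lpart_bound f eps : (0 < d)%N -> (exists C, cube_lipschitz C f) -> 0 < eps ->
  `|maxf d f - eps * Lpart d (fun x => f x / eps)|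
    <= eps * d%:R * ln (1 + 3 * (Num.sqrt d%:R)^-1 * lipconst d f / eps).
Proof.
move=> d_gt0 f_lip eps_gt0.
set K := lipconst d f; have K0 : 0 <= K := lipconst_ge0 f_lip.
have fK : cube_lipschitz K f := lipconst_lipschitz f_lip.
set r := Num.sqrt d%:R; have r_gt0 : 0 < r by rewrite sqrtr_gt0 ltr0n.
have f_sup := has_sup_cube_lipschitz K0 fK.
set M := maxf d f; set h := fun x => f x / eps.
have hK : cube_lipschitz (K / eps) h := cube_lipschitz_scale eps_gt0 fK.
have Keps0 : 0 <= K / eps by rewrite divr_ge0// ltW.
have L_le : Lpart d h <= M / eps.
  apply: cube_lipschitz_Lpart_le Keps0 hK _ => x cx.
  by rewrite ler_pM2r ?invr_gt0//; apply: ub_le_sup f_sup.2 _ _; exists x.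
pose b := K / (r * eps); have b0 : 0 <= b by rewrite divr_ge0// mulr_ge0// ltW.
have [s s01 bs] := exists_scale_ln1D3 b0.
have -> : 3 * r^-1 * K / eps = 3 * b by rewrite /b; field; rewrite !gt_eqF.
rewrite ger0_norm; last by rewrite subr_ge0 mulrC -ler_pdivlMr.
apply/ler_addgt0Pr => eta eta0.
have [_ [x cx <-] /= Mx] := sup_adherent eta0 f_sup; have {}Mx : M - eta < f x := Mx.
have := Lpart_ge_local Keps0 hK cx s01; rewrite -(ler_pM2l eps_gt0).
have -> : eps * (h x - K / eps * r * s + d%:R * ln s) = f x - eps * d%:R * (b * s - ln s).
  by rewrite /h /b -[d%:R](@sqr_sqrtr _ d%:R) ?ler0n// -/r; field; rewrite !gt_eqF.
have := ler_wpM2l (mulr_ge0 (ltW eps_gt0) (ler0n R d)) bs; lra.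
Qed.

Lemma Pgibbs_lower_tail f (eps delta : R) : (exists M, forall x, cube d x -> `|f x| <= M) ->
  0 < eps -> 0 < delta ->
  Pgibbs d (fun x => f x / eps)
    [set x | cube d x /\ f x < eps * Lpart d (fun x => f x / eps) - eps * ln delta^-1]
  <= delta.
Proof.
move=> [M fM] eps_gt0 delta_gt0.
set h := fun x => f x / eps.
have h_bounded x : cube d x -> - M / eps <= h x <= M / eps.
  by move=> cx; rewrite /h !ler_pM2r ?invr_gt0// -ler_norml fM.
rewrite -[X in _ <= X](lnK delta_gt0) -[ln delta](addrK (Lpart d h)).
apply: (Pgibbs_le_expR h_bounded) => x [_ hx] cx; rewrite ler_pdivrMr//.
by rewrite lnV ?posrE// in hx; rewrite mulrDl addrC; lra.
Qed.

End free_energy.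

Theorem lemma1 (R : realType) (d : nat) (dpos : (0 < d)%N) :
  (forall f : d.-tuple R -> R,
     (exists C : R, forall x y, cube d x -> cube d y ->
          `|f x - f y| <= C * eucl_dist d x y) ->
     (forall eps : R, 0 < eps ->
        `|maxf d f - eps * Lpart d (fun x => f x / eps)|
          <= eps * d%:R
             * ln (1 + 3 * (Num.sqrt d%:R)^-1 * lipconst d f / eps)) /\
     ((fun eps : R => eps * d%:R
             * ln (1 + 3 * (Num.sqrt d%:R)^-1 * lipconst d f / eps))
        x @[x --> 0^'+] --> 0)) /\
  (forall f : d.-tuple R -> R,
     measurable_fun (cube d) f ->
     (exists M : R, forall x, cube d x -> `|f x| <= M) ->
     forall eps delta : R, 0 < eps -> 0 < delta -> delta <= 1 ->
       Pgibbs d (fun x => f x / eps)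
         [set x | cube d x /\
                  f x < eps * Lpart d (fun x => f x / eps) - eps * ln delta^-1]
       <= delta).
Proof.
split=> [f f_lip|f _ f_bounded eps delta eps_gt0 delta_gt0 _]; last first.
  exact: Pgibbs_lower_tail.
split=> [eps|]; first exact: maxf_Lpart_bound.
apply: cvg_mul_ln1Ddiv; rewrite !mulr_ge0 ?invr_ge0 ?sqrtr_ge0//.
exact: lipconst_ge0 f_lip.
Qed.
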